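(* Let $(\mathcal X,\mathcal F,t)$ be an instance of SET-COVER and let $\mathbb G$ be the graph constructed from it as described in the context. If $E'$ is a good 3-completion set of $\mathbb G$, then $\{S_j\in\mathcal F : (S_j,P)\in E'\}$ is a set cover of $\mathcal X$ of size $|E'|$.
   Context: SET-COVER instance $(\mathcal X,\mathcal F,t)$: a finite set $\mathcal X$ of items, a family $\mathcal F$ of nonempty subsets of $\mathcal X$ such that every item lies in some set of $\mathcal F$, and an integer $t$; a set cover is a subfamily $\mathcal S\subseteq\mathcal F$ with $\bigcup_{S\in\mathcal S}S=\mathcal X$. The graph $\mathbb G$ is built as follows: (1) for each set $S_j\in\mathcal F$ add a vertex $S_j$ (set vertex); (2) for each item $x_i\in\mathcal X$ add an item subgraph $I_i$ consisting of $2|\mathcal X|$ new isolated vertices; (3) for each $x_i$ and $S_j$ with $x_i\in S_j$, join $S_j$ to every vertex of $I_i$; (4) for each edge $(S_j,v)$ added in (3), add a new (auxiliary) vertex $w$ adjacent to $S_j$ and $v$; (5) add a common vertex $P$ adjacent to every vertex of every $I_i$. A connected graph has a $(3,1)$-cover if each edge lies in a triangle; a 3-completion set of $\mathbb G$ is a set $E'$ of non-edges of $\mathbb G$ such that $\mathbb G\cup E'$ has a $(3,1)$-cover; it is good if $E'\subseteq\{(S_j,P): S_j\in\mathcal F\}$. *)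

From mathcomp Require Import all_boot.
Set Implicit Arguments. Unset Strict Implicit. Unset Printing Implicit Defensive.

Section Construction.
Variable X : finType.

(* index type of the 2|X| vertices of an item subgraph I_i *)
Definition idx := 'I_(2 * #|X|).

(* Vertex type of the graph G:
   inl (inl S)          : set vertex S_j   (valid iff S \in F)
   inl (inr (x, k))     : k-th vertex of the item subgraph I_x
   inr (inl (S, x, k))  : auxiliary vertex w of the edge (S, (x,k))
                          (valid iff S \in F and x \in S)
   inr (inr tt)         : the common vertex P *)
Definition vertex : finType :=
  (({set X} + (X * idx)) + (({set X} * X * idx) + unit))%type.

Definition VS (A : {set X}) : vertex := inl (inl A).
Definition VI (x : X) (k : idx) : vertex := inl (inr (x, k)).
Definition VW (A : {set X}) (x : X) (k : idx) : vertex := inr (inl (A, x, k)).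
Definition VP : vertex := inr (inr tt).

Variable F : {set {set X}}.

Definition validv (v : vertex) : bool :=
  match v with
  | inl (inl A) => A \in F
  | inl (inr _) => true
  | inr (inl (A, x, _)) => (A \in F) && (x \in A)
  | inr (inr _) => true
  end.

(* oriented description of the edges added in steps (3),(4),(5) *)
Definition base_edge (u v : vertex) : bool :=
  match u, v with
  | inl (inl A), inl (inr (x, _)) => (A \in F) && (x \in A)
  | inr (inl (A, x, _)), inl (inl A') => [&& A' == A, A \in F & x \in A]
  | inr (inl (A, x, k)), inl (inr (x', k')) =>
      [&& x' == x, k' == k, A \in F & x \in A]
  | inr (inr _), inl (inr _) => true
  | _, _ => false
  end.

Definition adjG (u v : vertex) : bool := base_edge u v || base_edge v u.

(* E' is a set of unordered pairs of vertices, each given as a 2-element set *)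
Definition non_edge (e : {set vertex}) : Prop :=
  exists u v, [/\ u != v, validv u, validv v, ~~ adjG u v & e = [set u; v]].

Definition adjU (E' : {set {set vertex}}) (u v : vertex) : bool :=
  adjG u v || ((u != v) && ([set u; v] \in E')).

(* a connected graph (on the vertices validv) with adjacency adj has a
   (3,1)-cover if each edge lies in a triangle *)
Definition has_31_cover (adj : rel vertex) : Prop :=
  (forall u v, validv u -> validv v ->
     connect (fun a b => [&& validv a, validv b & adj a b]) u v) /\
  (forall u v, validv u -> validv v -> adj u v ->
     exists w, [&& validv w, adj u w & adj v w]).

Definition completion3 (E' : {set {set vertex}}) : Prop :=
  (forall e, e \in E' -> non_edge e) /\ has_31_cover (adjU E').

Definition good (E' : {set {set vertex}}) : Prop :=
  forall e, e \in E' -> exists2 A, A \in F & e = [set VS A; VP].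

End Construction.

Definition set_cover_instance (X : finType) (F : {set {set X}}) : Prop :=
  (forall A, A \in F -> A != set0) /\ (forall x : X, exists2 A, A \in F & x \in A).

Definition is_set_cover (X : finType) (F C : {set {set X}}) : Prop :=
  C \subset F /\ \bigcup_(A in C) A = [set: X].

From mathcomp Require Import all_boot.

Set Implicit Arguments. Unset Strict Implicit.

(** Let [v] be a vertex of the item subgraph of [x].  The edge [P v] lies in a
    triangle [P v w].  A good completion adds no edge at an item vertex, so
    [v w] is an edge of [G]; the neighbours of [P] in [G] are item vertices,
    which are pairwise non-adjacent, so [P w] is an added edge and [w] is a
    set vertex [S] with [(S, P)] in [E'].  Then [v S] is an edge of [G], i.e.
    [x] lies in [S].  The size claim holds because [S |-> (S, P)] is injective
    and, [E'] being good, maps the cover onto [E']. *)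

Section GoodCompletion.
Variables (X : finType) (F : {set {set X}}) (E' : {set {set vertex X}}).
Hypothesis goodE : good F E'.

Lemma good_itemN (x : X) (k : idx X) (w : vertex X) : [set VI x k; w] \notin E'.
Proof.
apply/negP => /goodE [A _ eA].
by have := set21 (VI x k) w; rewrite eA !inE.
Qed.

Lemma adjU_item (x : X) (k : idx X) (w : vertex X) :
  adjU F E' (VI x k) w = adjG F (VI x k) w.
Proof. by rewrite /adjU (negbTE (good_itemN x k w)) andbF orbF. Qed.

Lemma good_VP_pair (w : vertex X) :
  [set VP X; w] \in E' -> w != VP X -> exists A, w = VS A.
Proof.
move=> /goodE [A _ eA] wP; exists A.
by have := set22 (VP X) w; rewrite eA !inE (negbTE wP) orbF => /eqP.
Qed.

Lemma adjU_VP (w : vertex X) :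
  adjU F E' (VP X) w ->
  (exists x k, w = VI x k) \/ exists2 A, [set VS A; VP X] \in E' & w = VS A.
Proof.
case/orP => [| /andP [Pw PwE]].
  case: w => [[A|[x k]]|[[[A y] k]|[]]]; rewrite /adjG //= => _.
  by left; exists x, k.
have [|A wA] := good_VP_pair PwE; first by rewrite eq_sym.
by right; exists A; rewrite // -wA setUC.
Qed.

Lemma item_covered (x : X) (k : idx X) :
  has_31_cover F (adjU F E') ->
  exists2 A, A \in [set S in F | [set VS S; VP X] \in E'] & x \in A.
Proof.
case=> _ /(_ (VP X) (VI x k) isT isT isT) [w /and3P [_ Pw xw]].
rewrite adjU_item in xw.
case: (adjU_VP Pw) => [[y [k' wI]] | [A AE wA]]; move: xw.
  by rewrite wI /adjG.
rewrite wA /adjG /= => /andP [AF xA].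
by exists A; rewrite // inE AF.
Qed.

Lemma card_good :
  #|[set S in F | [set VS S; VP X] \in E']| = #|E'|.
Proof.
have pair_inj : injective (fun S : {set X} => [set VS S; VP X]).
  move=> A B eAB; have := set21 (VS A) (VP X).
  by rewrite eAB !inE => /orP [/eqP [] |].
rewrite -(card_imset _ pair_inj); apply: eq_card => e.
apply/imsetP/idP => [[A] | eE]; first by rewrite inE => /andP [_ AE] ->.
have [A AF eA] := goodE eE.
by exists A; rewrite // inE AF -eA.
Qed.

End GoodCompletion.

Theorem lemma1 (X : finType) (F : {set {set X}}) (t : nat)
  (E' : {set {set vertex X}}) :
  set_cover_instance F ->
  completion3 F E' ->
  good F E' ->
  is_set_cover F [set S in F | [set VS S; @VP X] \in E'] /\
  #|[set S in F | [set VS S; @VP X] \in E']| = #|E'|.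
Proof.
move=> _ [_ cover31] goodE; split; last exact: card_good.
split; first by apply/subsetP => A; rewrite inE => /andP [].
apply/setP => x; rewrite inE; apply/bigcupP.
have idx_gt0 : 0 < 2 * #|X| by rewrite muln_gt0 /=; apply/card_gt0P; exists x.
exact: item_covered goodE x (Ordinal idx_gt0) cover31.
Qed.
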